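(* Let $\alpha>0$ and define, for $\varrho\in[0,1]$, \[ \Xi(\varrho)=-S(\varrho)+\varrho\log\pi_1(\alpha\varrho)+(1-\varrho)\log\pi_1\bigl(\alpha(1-\varrho)\bigr)-\alpha\varrho(1-\varrho). \] Then $\Xi$ is continuous on $[0,1]$, symmetric about $\varrho=1/2$ (i.e. $\Xi(\varrho)=\Xi(1-\varrho)$), strictly convex on $[0,1]$, and consequently $\Xi(\varrho)<\Xi(0)$ for all $\varrho\in(0,1)$. Moreover, the function $G(\eta)=\eta\log\frac{1-\mathrm{e}^{-\eta}}{\eta}$ satisfies $G''(\eta)+1>0$ for all $\eta>0$.
   Context: $S(\varrho)=\varrho\log\varrho+(1-\varrho)\log(1-\varrho)$ with the convention $0\log0=0$; $\pi_1(x)=1-\mathrm{e}^{-x}$; the terms $\varrho\log\pi_1(\alpha\varrho)$ and $(1-\varrho)\log\pi_1(\alpha(1-\varrho))$ are interpreted as $0$ at $\varrho=0$ and $\varrho=1$ respectively. *)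

From Stdlib Require Import Reals.
From Coquelicot Require Import Coquelicot.
Open Scope R_scope.

Definition xlogx (x : R) : R := if Req_EM_T x 0 then 0 else x * ln x.
Definition S_ent (rho : R) : R := xlogx rho + xlogx (1 - rho).

Definition pi1 (x : R) : R := 1 - exp (- x).

Definition term_a (alpha rho : R) : R :=
  if Req_EM_T rho 0 then 0 else rho * ln (pi1 (alpha * rho)).

Definition term_b (alpha rho : R) : R :=
  if Req_EM_T rho 1 then 0 else (1 - rho) * ln (pi1 (alpha * (1 - rho))).

Definition Xi (alpha rho : R) : R :=
  - S_ent rho + term_a alpha rho + term_b alpha rho - alpha * rho * (1 - rho).

Definition G (eta : R) : R := eta * ln ((1 - exp (- eta)) / eta).

Definition unit_interval (x : R) : Prop := 0 <= x <= 1.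

From Stdlib Require Import Reals Lra.
From Coquelicot Require Import Coquelicot.
Open Scope R_scope.

(* As [G(alpha rho) = alpha rho (log pi1(alpha rho) - log alpha - log rho)], the entropy and
   the logarithmic terms combine into
     [Xi(rho) = log alpha - alpha/2 + (K(alpha rho) + K(alpha (1 - rho))) / alpha],
   where [K(y) = G(y) + y^2/2].  Symmetry is then obvious, strict convexity of [Xi] on [[0,1]]
   reduces to that of [K] on [[0,oo)], i.e. to [G'' + 1 > 0], and a strictly convex function
   with equal endpoint values lies strictly below them inside.  With [u = e^y],
   [G''(y) + 1 = u q(y) / (y (u - 1)^2)] where [q(y) = y (u - 1/u) - (u + 1/u) + 2 - y^2]
   vanishes at [0] and has derivative [y (u + 1/u - 2) > 0]. *)

Lemma MVT_interior (f df : R -> R) a b : a < b ->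
  (forall c, a < c < b -> is_derive f c (df c)) ->
  (forall c, a <= c <= b -> continuous f c) ->
  exists c, a < c < b /\ f b - f a = df c * (b - a).
Proof.
intros hab hd hc.
pose (prf := fun c (H : a < c < b) =>
  exist (fun l => derivable_pt_lim f c l) (df c) (proj1 (is_derive_Reals _ _ _) (hd c H))).
destruct (MVT f id a b prf (fun c _ => derivable_pt_id c) hab) as [c [H e]].
- intros c H; apply continuity_pt_filterlim, hc; exact H.
- intros; apply derivable_continuous_pt, derivable_pt_id.
- exists c; split; [exact H|].
  rewrite (derive_pt_eq_0 f c (df c) (prf c H) (proj1 (is_derive_Reals _ _ _) (hd c H))) in e.
  rewrite (derive_pt_eq_0 id c 1 _ (derivable_pt_lim_id c)) in e.
  unfold id in e; lra.
Qed.

Lemma increasing_of_derive_pos (f df : R -> R) a b : a < b ->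
  (forall c, a < c < b -> is_derive f c (df c)) ->
  (forall c, a < c < b -> 0 < df c) ->
  (forall c, a <= c <= b -> continuous f c) ->
  f a < f b.
Proof.
intros hab hd hpos hc.
destruct (MVT_interior f df a b hab hd hc) as [c [H e]].
assert (0 < df c * (b - a)) by (apply Rmult_lt_0_compat; [apply hpos, H | lra]).
lra.
Qed.

Lemma chord_lt_of_derive_increasing (f df : R -> R) x y t : x < y -> 0 < t < 1 ->
  (forall c, x < c < y -> is_derive f c (df c)) ->
  (forall c, x <= c <= y -> continuous f c) ->
  (forall c1 c2, x < c1 -> c1 < c2 -> c2 < y -> df c1 < df c2) ->
  f (t * x + (1 - t) * y) < t * f x + (1 - t) * f y.
Proof.
intros hxy ht hd hc hincr.
set (z := t * x + (1 - t) * y).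
assert (hxz : x < z) by (unfold z; nra).
assert (hzy : z < y) by (unfold z; nra).
destruct (MVT_interior f df x z hxz) as [c1 [hc1 e1]];
  [intros; apply hd; lra | intros; apply hc; lra |].
destruct (MVT_interior f df z y hzy) as [c2 [hc2 e2]];
  [intros; apply hd; lra | intros; apply hc; lra |].
pose proof (hincr c1 c2 ltac:(lra) ltac:(lra) ltac:(lra)).
replace (z - x) with ((1 - t) * (y - x)) in e1 by (unfold z; ring).
replace (y - z) with (t * (y - x)) in e2 by (unfold z; ring).
assert (0 < t * (1 - t) * (y - x) * (df c2 - df c1)) by (repeat apply Rmult_lt_0_compat; lra).
nra.
Qed.

Definition strictly_convex_on (D : R -> Prop) (f : R -> R) : Prop :=
  forall x y t, D x -> D y -> x <> y -> 0 < t < 1 ->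
    f (t * x + (1 - t) * y) < t * f x + (1 - t) * f y.

Lemma strictly_convex_on_nonneg_of_derive2_pos (f df d2f : R -> R) :
  (forall c, 0 < c -> is_derive f c (df c)) ->
  (forall c, 0 < c -> is_derive df c (d2f c)) ->
  (forall c, 0 < c -> 0 < d2f c) ->
  (forall c, 0 <= c -> continuous f c) ->
  strictly_convex_on (Rle 0) f.
Proof.
intros hdf hd2f hpos hc.
assert (hincr : forall c1 c2, 0 < c1 -> c1 < c2 -> df c1 < df c2).
{ intros c1 c2 h1 h12.
  apply (increasing_of_derive_pos df d2f); auto.
  - intros c hc'; apply hd2f; lra.
  - intros c hc'; apply hpos; lra.
  - intros c hc'; apply (ex_derive_continuous (K := R_AbsRing) (V := R_NormedModule)).
    exists (d2f c); apply hd2f; lra. }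
assert (hlt : forall x y t, 0 <= x -> x < y -> 0 < t < 1 ->
  f (t * x + (1 - t) * y) < t * f x + (1 - t) * f y).
{ intros x y t hx hxy ht.
  apply (chord_lt_of_derive_increasing f df); auto.
  - intros c hc'; apply hdf; lra.
  - intros c hc'; apply hc; lra.
  - intros c1 c2 h1 h12 _; apply hincr; lra. }
intros x y t hx hy hxy ht.
destruct (Rlt_or_le x y) as [h|h].
- apply hlt; auto.
- replace (t * x + (1 - t) * y) with ((1 - t) * y + (1 - (1 - t)) * x) by ring.
  pose proof (hlt y x (1 - t) hy ltac:(lra) ltac:(lra)); lra.
Qed.

Lemma strictly_convex_on_affine_comp (D E : R -> Prop) (f : R -> R) a b : b <> 0 ->
  (forall x, E x -> D (a + b * x)) ->
  strictly_convex_on D f -> strictly_convex_on E (fun x => f (a + b * x)).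
Proof.
intros hb hDE hf x y t hx hy hxy ht.
replace (a + b * (t * x + (1 - t) * y)) with (t * (a + b * x) + (1 - t) * (a + b * y)) by ring.
apply hf; auto.
intro e; apply hxy; apply (Rmult_eq_reg_l b); [lra | exact hb].
Qed.

Lemma strictly_convex_on_plus (D : R -> Prop) (f g : R -> R) :
  strictly_convex_on D f -> strictly_convex_on D g ->
  strictly_convex_on D (fun x => f x + g x).
Proof.
intros hf hg x y t hx hy hxy ht.
pose proof (hf x y t hx hy hxy ht); pose proof (hg x y t hx hy hxy ht); lra.
Qed.

Lemma strictly_convex_on_scal_shift (D : R -> Prop) (f : R -> R) c k : 0 < k ->
  strictly_convex_on D f -> strictly_convex_on D (fun x => c + k * f x).
Proof.
intros hk hf x y t hx hy hxy ht.
pose proof (Rmult_lt_compat_l k _ _ hk (hf x y t hx hy hxy ht)).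
replace (t * (c + k * f x) + (1 - t) * (c + k * f y))
  with (c + k * (t * f x + (1 - t) * f y)) by ring.
lra.
Qed.

Lemma strictly_convex_on_ext (D : R -> Prop) (f g : R -> R) :
  (forall x, f x = g x) -> strictly_convex_on D f -> strictly_convex_on D g.
Proof. intros e hf x y t hx hy hxy ht; rewrite <- !e; apply hf; auto. Qed.

Lemma strictly_convex_sym_lt_endpoint (f : R -> R) :
  strictly_convex_on (fun x => 0 <= x <= 1) f -> f 1 = f 0 ->
  forall rho, 0 < rho < 1 -> f rho < f 0.
Proof.
intros hf h10 rho hr.
pose proof (hf 0 1 (1 - rho) ltac:(lra) ltac:(lra) ltac:(lra) ltac:(lra)) as h.
replace ((1 - rho) * 0 + (1 - (1 - rho)) * 1) with rho in h by ring.
rewrite h10 in h; lra.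
Qed.

Lemma exp_gt_1 y : 0 < y -> 1 < exp y.
Proof. intros; rewrite <- exp_0; apply exp_increasing; lra. Qed.

Lemma pi1_pos y : 0 < y -> 0 < pi1 y.
Proof.
intros hy; unfold pi1; rewrite exp_Ropp.
pose proof (exp_gt_1 y hy).
assert (/ exp y < 1) by (rewrite <- Rinv_1; apply Rinv_lt_contravar; lra).
lra.
Qed.

Lemma G_eq y : 0 < y -> G y = y * (ln (pi1 y) - ln y).
Proof.
intros hy; pose proof (pi1_pos y hy).
change (y * ln (pi1 y / y) = y * (ln (pi1 y) - ln y)).
unfold Rdiv; rewrite ln_mult, ln_Rinv; auto with real; ring.
Qed.

Definition dG (y : R) : R := ln (pi1 y / y) + y / (exp y - 1) - 1.
Definition d2G (y : R) : R := 2 / (exp y - 1) - 1 / y - y * exp y / (exp y - 1) ^ 2.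

Lemma is_derive_G y : 0 < y -> is_derive G y (dG y).
Proof.
intros hy; pose proof (pi1_pos y hy); pose proof (exp_gt_1 y hy).
unfold G, dG, pi1 in *; auto_derive.
- repeat split; [lra | apply Rdiv_lt_0_compat; lra].
- change ((1 + - exp (- y)) * / y) with ((1 - exp (- y)) / y).
  rewrite exp_Ropp in *; field; repeat split; lra.
Qed.

Lemma is_derive_dG y : 0 < y -> is_derive dG y (d2G y).
Proof.
intros hy; pose proof (pi1_pos y hy); pose proof (exp_gt_1 y hy).
unfold dG, d2G, pi1 in *; auto_derive.
- repeat split; try lra; apply Rdiv_lt_0_compat; lra.
- rewrite exp_Ropp in *; field; repeat split; lra.
Qed.

Definition d2G_num (y : R) : R :=
  y * (exp y - exp (- y)) - (exp y + exp (- y)) + 2 - y ^ 2.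

Lemma d2G_num_pos y : 0 < y -> 0 < d2G_num y.
Proof.
intros hy.
replace 0 with (d2G_num 0) by (unfold d2G_num; rewrite Ropp_0, exp_0; ring).
assert (hd : forall c, is_derive d2G_num c (c * (exp c + exp (- c) - 2))).
{ intros c; unfold d2G_num; auto_derive; auto; ring. }
apply (increasing_of_derive_pos d2G_num (fun c => c * (exp c + exp (- c) - 2))); auto.
- intros c hc; apply Rmult_lt_0_compat; [lra|].
  pose proof (exp_gt_1 c ltac:(lra)); rewrite exp_Ropp.
  replace (exp c + / exp c - 2) with ((exp c - 1) ^ 2 / exp c) by (field; lra).
  apply Rdiv_lt_0_compat; [apply pow_lt|]; lra.
- intros c _; apply (ex_derive_continuous (K := R_AbsRing) (V := R_NormedModule)).
  eexists; apply hd.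
Qed.

Lemma d2G_plus_1_pos y : 0 < y -> 0 < d2G y + 1.
Proof.
intros hy; pose proof (d2G_num_pos y hy) as hq; pose proof (exp_gt_1 y hy).
replace (d2G y + 1) with (d2G_num y * exp y / (y * (exp y - 1) ^ 2)).
- apply Rdiv_lt_0_compat; [apply Rmult_lt_0_compat | apply Rmult_lt_0_compat]; try lra.
  apply pow_lt; lra.
- unfold d2G_num, d2G; rewrite exp_Ropp; field; split; lra.
Qed.

Lemma continuous_difference_quotient (f : R -> R) a l :
  derivable_pt_lim f a l ->
  continuous (fun x => if Req_EM_T x a then l else (f x - f a) / (x - a)) a.
Proof.
intros hd; apply continuity_pt_filterlim.
intros eps heps; destruct (hd eps heps) as [d hdd].
exists d; split; [apply cond_pos|].
intros x [[_ hx] hxd]; simpl in *; unfold R_dist in *.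
destruct (Req_EM_T x a) as [e|_]; [congruence|].
destruct (Req_EM_T a a) as [_|ne]; [|congruence].
specialize (hdd (x - a) ltac:(lra) hxd).
replace (a + (x - a)) with x in hdd by ring.
exact hdd.
Qed.

Lemma continuous_G y : 0 <= y -> continuous G y.
Proof.
intros hy; destruct (Req_dec y 0) as [->|ne].
- assert (hd : derivable_pt_lim pi1 0 1).
  { apply is_derive_Reals; unfold pi1; auto_derive; auto.
    rewrite Ropp_0, exp_0; ring. }
  pose proof (continuous_difference_quotient pi1 0 1 hd) as hq.
  set (q := fun x => if Req_EM_T x 0 then 1 else (pi1 x - pi1 0) / (x - 0)) in hq.
  assert (hpi0 : pi1 0 = 0) by (unfold pi1; rewrite Ropp_0, exp_0; ring).
  apply (continuous_ext (fun x => x * ln (q x))).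
  { intros x; unfold q, G; rewrite hpi0.
    destruct (Req_EM_T x 0) as [->|_]; [rewrite !Rmult_0_l; reflexivity|].
    rewrite !Rminus_0_r; reflexivity. }
  apply (continuous_mult (fun x => x) (fun x => ln (q x))); [apply continuous_id|].
  apply (continuous_comp q ln 0 hq), continuous_ln.
  unfold q; destruct (Req_EM_T 0 0); lra.
- apply (ex_derive_continuous (K := R_AbsRing) (V := R_NormedModule)).
  exists (dG y); apply is_derive_G; lra.
Qed.

Definition K (y : R) : R := G y + y ^ 2 / 2.

Lemma continuous_K y : 0 <= y -> continuous K y.
Proof.
intros hy; apply (continuous_plus G (fun y => y ^ 2 / 2)); [apply continuous_G; auto|].
apply (ex_derive_continuous (K := R_AbsRing) (V := R_NormedModule)); auto_derive; auto.
Qed.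

Lemma strictly_convex_on_nonneg_K : strictly_convex_on (Rle 0) K.
Proof.
apply (strictly_convex_on_nonneg_of_derive2_pos K (fun y => dG y + y) (fun y => d2G y + 1)).
- intros c hc; apply (is_derive_plus G (fun y => y ^ 2 / 2)); [apply is_derive_G; auto|].
  auto_derive; auto; field.
- intros c hc; apply (is_derive_plus dG (fun y => y)); [apply is_derive_dG; auto|].
  auto_derive; auto.
- exact d2G_plus_1_pos.
- exact continuous_K.
Qed.

Lemma is_derive_Derive_G y : 0 < y -> is_derive (Derive G) y (d2G y).
Proof.
intros hy; apply (is_derive_ext_loc dG); [|apply is_derive_dG; exact hy].
apply (filter_imp (fun t => 0 < t)); [|apply (open_gt 0); exact hy].
intros t ht; symmetry; apply is_derive_unique, is_derive_G; exact ht.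
Qed.

Lemma term_b_eq alpha rho : term_b alpha rho = term_a alpha (1 - rho).
Proof.
unfold term_a, term_b.
destruct (Req_EM_T rho 1), (Req_EM_T (1 - rho) 0); try reflexivity; lra.
Qed.

Lemma term_a_eq alpha rho : 0 < alpha -> 0 <= rho ->
  term_a alpha rho = xlogx rho + G (alpha * rho) / alpha + rho * ln alpha.
Proof.
intros ha hr; unfold term_a, xlogx.
destruct (Req_EM_T rho 0) as [->|ne].
- unfold G; rewrite Rmult_0_r; field; lra.
- assert (har : 0 < alpha * rho) by (apply Rmult_lt_0_compat; lra).
  rewrite (G_eq _ har), ln_mult by lra.
  field; lra.
Qed.

Definition Xi_K (alpha rho : R) : R :=
  ln alpha - alpha / 2 + / alpha * (K (alpha * rho) + K (alpha * (1 - rho))).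

Lemma Xi_eq_Xi_K alpha rho : 0 < alpha -> 0 <= rho <= 1 -> Xi alpha rho = Xi_K alpha rho.
Proof.
intros ha hr.
unfold Xi, S_ent, Xi_K, K.
rewrite term_b_eq, !term_a_eq by lra.
field; lra.
Qed.

Lemma Xi_K_sym alpha rho : Xi_K alpha (1 - rho) = Xi_K alpha rho.
Proof. unfold Xi_K; replace (1 - (1 - rho)) with rho by ring; ring. Qed.

Lemma strictly_convex_Xi_K alpha : 0 < alpha ->
  strictly_convex_on (fun rho => 0 <= rho <= 1) (Xi_K alpha).
Proof.
intros ha.
apply (strictly_convex_on_ext _ (fun rho =>
  ln alpha - alpha / 2 + / alpha * (K (0 + alpha * rho) + K (alpha + - alpha * rho)))).
{ intros rho; unfold Xi_K; do 4 f_equal; ring. }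
apply strictly_convex_on_scal_shift; [apply Rinv_0_lt_compat; exact ha|].
apply strictly_convex_on_plus;
  (apply (strictly_convex_on_affine_comp (Rle 0));
   [lra | intros; nra | exact strictly_convex_on_nonneg_K]).
Qed.

Lemma continuous_Xi_K alpha rho : 0 < alpha -> 0 <= rho <= 1 ->
  continuous (Xi_K alpha) rho.
Proof.
intros ha hr.
apply (continuous_plus (fun _ => ln alpha - alpha / 2)); [apply continuous_const|].
apply (continuous_scal_r (/ alpha) (fun r => K (alpha * r) + K (alpha * (1 - r)))).
apply (continuous_plus (fun r => K (alpha * r)));
  (apply (continuous_comp _ K);
   [apply (ex_derive_continuous (K := R_AbsRing) (V := R_NormedModule)); auto_derive; auto
   | apply continuous_K; nra]).
Qed.

Theorem mainTheorem14 (alpha : R) (halpha : 0 < alpha) :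
  continuous_on unit_interval (Xi alpha)
  /\ (forall rho, 0 <= rho <= 1 -> Xi alpha rho = Xi alpha (1 - rho))
  /\ (forall x y t, 0 <= x <= 1 -> 0 <= y <= 1 -> x <> y -> 0 < t < 1 ->
        Xi alpha (t * x + (1 - t) * y) < t * Xi alpha x + (1 - t) * Xi alpha y)
  /\ (forall rho, 0 < rho < 1 -> Xi alpha rho < Xi alpha 0)
  /\ (forall eta, 0 < eta -> ex_derive G eta)
  /\ (forall eta, 0 < eta ->
        ex_derive (Derive G) eta /\ Derive (Derive G) eta + 1 > 0).
Proof.
assert (hsym : forall rho, 0 <= rho <= 1 -> Xi alpha rho = Xi alpha (1 - rho)).
{ intros rho hr; rewrite !Xi_eq_Xi_K, Xi_K_sym by (auto; lra); reflexivity. }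
assert (hconv : strictly_convex_on (fun rho => 0 <= rho <= 1) (Xi alpha)).
{ intros x y t hx hy hxy ht; rewrite !Xi_eq_Xi_K by (auto; nra).
  apply strictly_convex_Xi_K; auto. }
split; [|split; [exact hsym|split; [exact hconv|split; [|split]]]].
- apply (continuous_on_ext unit_interval (Xi_K alpha)).
  { intros rho hr; symmetry; apply Xi_eq_Xi_K; auto. }
  apply continuous_on_forall; intros rho hr; apply continuous_Xi_K; auto.
- apply strictly_convex_sym_lt_endpoint; [exact hconv|].
  rewrite hsym by lra; f_equal; ring.
- intros eta he; exists (dG eta); apply is_derive_G; exact he.
- intros eta he; split.
  + exists (d2G eta); apply is_derive_Derive_G; exact he.
  + rewrite (is_derive_unique _ _ _ (is_derive_Derive_G eta he)).
    apply Rlt_gt, d2G_plus_1_pos; exact he.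
Qed.
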